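(* Let $b$ be a prime and $m,s\in\mathbb{N}$. Let $p$ be drawn uniformly from $\mathbb{P}_m$ and, independently, $\boldsymbol{g}=(g_1,\dots,g_s)$ uniformly from $\mathbb{G}_m^s$. For every $\boldsymbol{k}\in\mathbb{N}_0^s\setminus\{\boldsymbol{0}\}$, \[\Pr\left[\boldsymbol{k}\in P^\perp(p,\boldsymbol{g})\right]\le\frac{3\mu_1(\boldsymbol{k})}{b^m-1}.\] Moreover, if $k_j<b^m$ for all $j$, then \[\Pr\left[\boldsymbol{k}\in P^\perp(p,\boldsymbol{g})\right]\le\frac{1}{b^m-1}.\]
   Context: $\mathbb{F}_b$ is the field with $b$ elements. $\mathbb{P}_m$ is the set of monic irreducible polynomials in $\mathbb{F}_b[x]$ of degree $m$; $\mathbb{G}_m=\{g\in\mathbb{F}_b[x]\mid g\neq0,\ \deg(g)<m\}$. For $k\in\mathbb{N}_0$ with $b$-adic expansion $k=\kappa_0+\kappa_1b+\cdots$, set $k(x)=\kappa_0+\kappa_1x+\cdots\in\mathbb{F}_b[x]$. The dual net of the (infinite-precision) polynomial lattice point set with modulus $p$ and generating vector $\boldsymbol g$ is $P^\perp(p,\boldsymbol{g})=\{\boldsymbol{k}\in\mathbb{N}_0^s\mid \sum_{j=1}^sk_j(x)g_j(x)\equiv0\pmod{p(x)}\}$. NRT weight: for $k\in\mathbb{N}$, $\mu_1(k)$ is the number of $b$-adic digits of $k$ (i.e. $\mu_1(k)=c$ iff $b^{c-1}\le k<b^c$), $\mu_1(0)=0$, and $\mu_1(\boldsymbol{k})=\sum_{j=1}^s\mu_1(k_j)$.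 *)

From HB Require Import structures.
From mathcomp Require Import all_boot all_order all_algebra.
From mathcomp Require Import boolp.
Set Implicit Arguments. Unset Strict Implicit. Unset Printing Implicit Defensive.
Import Order.TTheory GRing.Theory Num.Theory.
Local Open Scope ring_scope.

Definition polyOfRow (b n : nat) (c : 'rV['F_b]_n) : {poly 'F_b} :=
  \sum_(i < n) c ord0 i *: 'X^i.

(* k(x) = kappa_0 + kappa_1 x + ... for the b-adic digits kappa_i of k
   (k has at most k+1 digits, so truncating at degree k is harmless). *)
Definition natpoly (b k : nat) : {poly 'F_b} :=
  \poly_(i < k.+1) (((k %/ b ^ i) %% b)%N%:R : 'F_b).

Definition Pm (b m : nat) : {set 'rV['F_b]_m.+1} :=
  [set c | (polyOfRow c \is monic) && (size (polyOfRow c) == m.+1)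
           && `[< irreducible_poly (polyOfRow c) >] ].

Definition Gm (b m : nat) : {set 'rV['F_b]_m} :=
  [set c | polyOfRow c != 0].

Definition in_dual (b s : nat) (p : {poly 'F_b}) (g : 'I_s -> {poly 'F_b})
  (k : 'I_s -> nat) : bool :=
  p %| \sum_(j < s) natpoly b (k j) * g j.

Definition dual_prob (b m s : nat) (k : 'I_s -> nat) : rat :=
  (#|[set pg : 'rV['F_b]_m.+1 * {ffun 'I_s -> 'rV['F_b]_m} |
      [&& pg.1 \in Pm b m, [forall j, pg.2 j \in Gm b m] &
          in_dual (polyOfRow pg.1) (fun j => polyOfRow (pg.2 j)) k] ]|)%:R
  / (#|Pm b m| * #|Gm b m| ^ s)%N%:R.

(* NRT weight: number of b-adic digits; mu1 k = c iff b^(c-1) <= k < b^c *)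
Definition mu1 (b k : nat) : nat := if k == 0%N then 0%N else (trunc_log b k).+1.

Definition mu1v (b s : nat) (k : 'I_s -> nat) : nat := \sum_(j < s) mu1 b (k j).

(* Split the pairs (p, g) according to whether p divides every k_j(x).  If
   p does not divide k_j0(x), then once the g_j with j <> j0 are fixed, at most
   one g_j0 of degree < m = deg p satisfies p | sum_j k_j(x) g_j(x); such p
   contribute at most 1/(b^m - 1) to the probability.  The p dividing every
   k_j(x) are distinct monic irreducible factors of a single nonzero k_j1(x), so
   there are fewer than mu_1(k)/m of them, and none when k_j1 < b^m.  Finally
   3 m |P_m| >= b^m: an element of the field with b^m elements either has its
   minimal polynomial over F_b in P_m (at most m |P_m| such elements) or lies in
   a subfield with b^d elements, 2d <= m, and those cover at most
   2 b^(m/2) - 2 <= 2 b^m / 3 elements. *)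

From mathcomp Require Import all_boot all_order all_algebra all_field.
From mathcomp Require Import boolp zify ring.
Import Order.TTheory GRing.Theory Num.Theory.
Local Open Scope ring_scope.

Set Implicit Arguments. Unset Strict Implicit. Unset Printing Implicit Defensive.

Lemma leq_card_bigcup (I : Type) (T : finType) (r : seq I) (P : pred I)
    (A : I -> {set T}) :
  (#|\bigcup_(i <- r | P i) A i| <= \sum_(i <- r | P i) #|A i|)%N.
Proof.
elim/big_ind2: _ => [|m1 B m2 C le1 le2|//]; first by rewrite cards0.
by rewrite (leq_trans (leq_card_setU B C)) ?leq_add.
Qed.

Lemma sum_expn_le (b n : nat) : (1 < b)%N ->
  ((\sum_(1 <= d < n.+1) b ^ d).+2 <= 2 * b ^ n)%N.
Proof.
move=> b_gt1; elim: n => [|n IH]; first by rewrite big_geq.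
rewrite big_nat_recr //= expnS.
have : (2 * b ^ n <= b * b ^ n)%N by rewrite leq_mul2r b_gt1 orbT.
lia.
Qed.

Lemma sum_expn_half_le (b m : nat) : (1 < b)%N ->
  (3 * \sum_(1 <= d < m./2.+1) b ^ d <= 2 * b ^ m)%N.
Proof.
move=> b_gt1; have := sum_expn_le m./2 b_gt1.
have : (b ^ m./2 * b ^ m./2 <= b ^ m)%N.
  by rewrite -expnD leq_pexp2l ?(ltnW b_gt1) //; lia.
nia.
Qed.

Lemma leq_half_of_dvdn (d n : nat) :
  (0 < n)%N -> (d %| n)%N -> d != n -> (d.*2 <= n)%N.
Proof.
move=> n_gt0 /dvdnP[q def_n]; rewrite def_n in n_gt0 *.
case: q n_gt0 {def_n} => [|[|q]] //; first by rewrite mul1n eqxx.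
by move=> _ _; rewrite -mul2n leq_mul2r; apply/orP; right.
Qed.

Lemma ler_nat_ratio (R : numFieldType) (n d x g : nat) :
  (0 < g)%N -> (n * g <= x * d)%N -> n%:R / d%:R <= x%:R / g%:R :> R.
Proof.
move=> g_gt0 le_ng; case: d le_ng => [|d] le_ng.
  by rewrite invr0 mulr0 divr_ge0 ?ler0n.
by rewrite ler_pdivrMr ?ltr0n // mulrAC ler_pdivlMr ?ltr0n // -!natrM ler_nat.
Qed.

Lemma card_roots_lt (R : finIdomainType) (P : {poly R}) :
  P != 0 -> (#|[set x | root P x]| < size P)%N.
Proof.
move=> nzP; rewrite cardE; apply: max_poly_roots => //; last exact: enum_uniq.
by apply/allP => x; rewrite mem_enum inE.
Qed.

Lemma card_expr_fixed_le (R : finIdomainType) (n : nat) :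
  (1 < n)%N -> (#|[set x : R | x ^+ n == x]| <= n)%N.
Proof.
move=> n_gt1; have sizeP : size ('X^n - 'X : {poly R}) = n.+1.
  by rewrite size_polyDl ?size_polyXn // size_polyN size_polyX ltnS.
have nzP : 'X^n - 'X != 0 :> {poly R} by rewrite -size_poly_eq0 sizeP.
rewrite -ltnS -sizeP (leq_trans _ (card_roots_lt nzP)) //.
rewrite ltnS; apply/subset_leq_card/subsetP => x.
by rewrite !inE /root !hornerE subr_eq0.
Qed.

Lemma coprimep_monic_irreducible (R : idomainType) (p q : {poly R}) :
  p \is monic -> q \is monic -> irreducible_poly p -> irreducible_poly q ->
  p != q -> coprimep p q.
Proof.
move=> mon_p mon_q irr_p [_ irr_q]; rewrite irreducible_poly_coprime //.
apply: contra => dvd_pq; rewrite -eqp_monic // irr_q //.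
by case: irr_p => /gtn_eqF ->.
Qed.

Lemma dvdp_prod_coprime (R : idomainType) (I : finType) (A : {set I})
    (p : I -> {poly R}) (f : {poly R}) :
  {in A &, forall i j, i != j -> coprimep (p i) (p j)} ->
  {in A, forall i, p i %| f} -> \prod_(i in A) p i %| f.
Proof.
move=> copA dvdA; rewrite -big_enum /=.
have : {subset enum A <= A} by move=> i; rewrite mem_enum.
elim: (enum A) (enum_uniq A) => [|i s IH] /=; first by rewrite big_nil dvd1p.
case/andP=> i_s uniq_s sA; have Ai : i \in A by rewrite sA ?mem_head.
have cop : coprimep (p i) (\prod_(j <- s) p j).
  rewrite big_seq; elim/big_rec: _ => [|j q s_j cop_q]; first exact: coprimep1.
  have Aj : j \in A by rewrite sA // inE s_j orbT.
  rewrite coprimepMr cop_q copA //.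
  by apply: contraNneq i_s => ->.
rewrite big_cons Gauss_dvdp // dvdA // IH // => j s_j.
by rewrite sA // inE s_j orbT.
Qed.

Lemma dvdp_mulD_uniq (R : fieldType) (p a r u v : {poly R}) :
  coprimep p a -> (size u < size p)%N -> (size v < size p)%N ->
  p %| a * u + r -> p %| a * v + r -> u = v.
Proof.
move=> cop_pa lt_u lt_v dvd_u dvd_v; apply/eqP; rewrite -subr_eq0.
have : p %| u - v.
  rewrite -(Gauss_dvdpr _ cop_pa).
  by rewrite (_ : a * (u - v) = a * u + r - (a * v + r)) ?dvdp_sub //; ring.
apply: contraTT => nz_uv; apply/negP => /(dvdp_leq nz_uv).
rewrite leqNgt (leq_ltn_trans (size_polyD _ _)) // size_polyN gtn_max.
by rewrite lt_u lt_v.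
Qed.

Section RowPolynomials.
Variable b : nat.

Lemma polyOfRowE n (c : 'rV['F_b]_n) : polyOfRow c = rVpoly c.
Proof.
rewrite {2}[c]row_sum_delta linear_sum; apply: eq_bigr => i _.
by rewrite [RHS]linearZ /= rVpoly_delta.
Qed.

Lemma polyOfRow_inj n : injective (@polyOfRow b n).
Proof. by move=> c c'; rewrite !polyOfRowE => /(can_inj (@rVpolyK _ _)). Qed.

Lemma size_polyOfRow n (c : 'rV['F_b]_n) : (size (polyOfRow c) <= n)%N.
Proof. by rewrite polyOfRowE size_poly. Qed.

Lemma PmP m (c : 'rV['F_b]_m.+1) :
  reflect [/\ polyOfRow c \is monic, size (polyOfRow c) = m.+1
            & irreducible_poly (polyOfRow c)] (c \in Pm b m).
Proof.
rewrite inE; apply: (iffP idP) => [/andP[/andP[-> /eqP ->] /asboolP] //|].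
by case=> -> -> irr_c; rewrite eqxx; apply/asboolP.
Qed.

Lemma card_Gm m : prime b -> #|Gm b m| = (b ^ m - 1)%N.
Proof.
move=> b_pr; have -> : (b ^ m)%N = #|'rV['F_b]_m|.
  by rewrite card_mx mul1n card_Fp.
rewrite subn1 -(cardC1 0); apply: eq_card => c.
rewrite !inE -(inj_eq (@polyOfRow_inj m)).
by rewrite (_ : polyOfRow 0 = 0) // polyOfRowE linear0.
Qed.

Lemma card_Pm_dvdp_lt m (f : {poly 'F_b}) : f != 0 ->
  (#|[set c in Pm b m | (polyOfRow c %| f)%R]| * m < size f)%N.
Proof.
move=> nz_f; set S := [set c in Pm b m | _].
have S_Pm c : c \in S -> c \in Pm b m by rewrite inE => /andP[].
have dvd_prod : \prod_(c in S) polyOfRow c %| f.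
  apply: dvdp_prod_coprime => [c c' /S_Pm/PmP[mon _ irr] /S_Pm/PmP[mon' _ irr']|].
    by move=> neq_cc'; rewrite coprimep_monic_irreducible ?(inj_eq (@polyOfRow_inj _)).
  by move=> c; rewrite inE => /andP[].
have := dvdp_leq nz_f dvd_prod; apply: leq_trans.
rewrite size_prod => [|c /S_Pm/PmP[_ size_c _]]; last by rewrite -size_poly_eq0 size_c.
rewrite (eq_bigr (fun=> m.+1)) => [|c /S_Pm/PmP[] //].
by rewrite sum_nat_const (eq_card (_ : S =i S)) //; lia.
Qed.

End RowPolynomials.

Section Digits.
Variables (b : nat) (b_gt1 : (1 < b)%N).

Lemma ltn_expn_mu1 k : (k < b ^ mu1 b k)%N.
Proof. by rewrite /mu1; case: eqP => [->|_]; last exact: trunc_log_ltn. Qed.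

Lemma size_natpoly_le k n : (k < b ^ n)%N -> (size (natpoly b k) <= n)%N.
Proof.
move=> lt_k; apply/leq_sizeP => i le_ni; rewrite coef_poly divn_small ?mod0n.
  by rewrite mulr0n if_same.
exact: leq_trans lt_k (leq_pexp2l (ltnW b_gt1) le_ni).
Qed.

Lemma natpoly_neq0 k : prime b -> k != 0%N -> natpoly b k != 0.
Proof.
move=> b_pr k_neq0; set t := trunc_log b k.
have le_k : (b ^ t <= k)%N by rewrite trunc_logP // lt0n.
have digit_lt : (k %/ b ^ t < b)%N.
  by rewrite ltn_divLR ?expn_gt0 ?(ltnW b_gt1) // -expnS trunc_log_ltn.
have digit_gt0 : (0 < k %/ b ^ t)%N by rewrite divn_gt0 ?expn_gt0 ?(ltnW b_gt1).
apply: contraTneq digit_gt0 => /(congr1 (fun q : {poly 'F_b} => nat_of_ord q`_t)).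
rewrite coef_poly ltnS (leq_trans (ltnW (ltn_expl t b_gt1)) le_k).
by rewrite coef0 val_Fp_nat // !modn_small // => ->.
Qed.

End Digits.

Section FiniteFieldElements.
Variables (b : nat) (F : finFieldType) (charF : b \in [char F]).
Let L := pPrimeCharType charF.
Let n := \dim {:L}.

Lemma minPoly_Fp (a : L) :
  exists2 q : {poly 'F_b}, minPoly 1 a = map_poly (in_alg L) q
                         & irreducible_poly q.
Proof.
have [q def_q] := polyOver1P (minPolyOver 1 a); exists q => //.
split=> [|r r_neq1 dvd_rq].
  by rewrite -(size_map_poly (in_alg L)) -def_q size_minPoly ltnS.
have r_over1 : map_poly (in_alg L) r \is a polyOver 1%VS.
  by apply/polyOver1P; exists r.
have := minPoly_irr (x := a) r_over1; rewrite def_q eqp_map dvdp_map dvd_rq.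
case/(_ isT)/orP => //; rewrite -(rmorph1 (map_poly (in_alg L))) eqp_map.
by move/eqp_size; rewrite size_poly1 => /eqP; rewrite (negPf r_neq1).
Qed.

Lemma expr_card_adjoin_degree (a : L) : a ^+ (b ^ adjoin_degree 1 a) = a.
Proof.
have := Fermat's_little_theorem <<1%AS; a>>%AS a.
rewrite memv_adjoin card_Fp ?(pcharf_prime charF) //.
by rewrite dim_Fadjoin dimv1 muln1 => /esym/eqP.
Qed.

Lemma card_adjoin_degree_full :
  (#|[set a : L | adjoin_degree 1 a == n]| <= #|Pm b n| * n)%N.
Proof.
pose roots (c : 'rV['F_b]_n.+1) :=
  [set a : L | root (map_poly (in_alg L) (polyOfRow c)) a].
have sub : [set a : L | adjoin_degree 1 a == n] \subset
           \bigcup_(c in Pm b n) roots c.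
  apply/subsetP => a; rewrite inE => /eqP deg_a.
  have [q def_q irr_q] := minPoly_Fp a.
  have size_q : size q = n.+1.
    by rewrite -(size_map_poly (in_alg L)) -def_q size_minPoly deg_a.
  apply/bigcupP; exists (poly_rV q); last first.
    by rewrite inE polyOfRowE poly_rV_K ?size_q // -def_q root_minPoly.
  apply/PmP; rewrite polyOfRowE poly_rV_K ?size_q //; split=> //.
  by rewrite -(map_monic (in_alg L)) -def_q monic_minPoly.
rewrite -sum_nat_const (leq_trans (subset_leq_card sub)) //.
rewrite -big_enum /= (leq_trans (leq_card_bigcup _ _ _)) // big_enum /=.
apply: leq_sum => c /PmP[_ size_c _]; rewrite -ltnS.
have <- : size (map_poly (in_alg L) (polyOfRow c)) = n.+1 by rewrite size_map_poly.
by apply: card_roots_lt; rewrite map_poly_eq0 -size_poly_eq0 size_c.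
Qed.

Lemma card_adjoin_degree_proper :
  (#|[set a : L | adjoin_degree 1 a != n]| <= \sum_(1 <= d < n./2.+1) b ^ d)%N.
Proof.
have b_gt1 := prime_gt1 (pcharf_prime charF).
have sub : [set a : L | adjoin_degree 1 a != n] \subset
           \bigcup_(1 <= d < n./2.+1) [set a : L | a ^+ (b ^ d) == a].
  apply/subsetP => a; rewrite inE => deg_a; set d := adjoin_degree 1 a.
  have dvd_d : (d %| n)%N.
    by rewrite /d adjoin_degreeE dimv1 divn1 field_dimS ?subvf.
  have half_d : (d.*2 <= n)%N by rewrite leq_half_of_dvdn // adim_gt0.
  have d_range : d \in index_iota 1 n./2.+1.
    by rewrite mem_index_iota (_ : 0 < d)%N //=; lia.
  rewrite (bigD1_seq d) ?iota_uniq //= in_setU inE.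
  by rewrite expr_card_adjoin_degree eqxx.
rewrite (leq_trans (subset_leq_card sub)) // (leq_trans (leq_card_bigcup _ _ _)) //.
rewrite big_seq_cond [X in (_ <= X)%N]big_seq_cond; apply: leq_sum => d.
rewrite andbT mem_index_iota => /andP[d_gt0 _].
by rewrite card_expr_fixed_le // -(expn0 b) ltn_exp2l.
Qed.

Lemma card_finfield_le :
  (#|L| <= #|Pm b n| * n + \sum_(1 <= d < n./2.+1) b ^ d)%N.
Proof.
rewrite -(cardsC [set a : L | adjoin_degree 1 a == n]) leq_add //.
  exact: card_adjoin_degree_full.
rewrite (leq_trans _ card_adjoin_degree_proper) // subset_leq_card //.
by apply/subsetP => a; rewrite !inE.
Qed.

End FiniteFieldElements.

Lemma expn_le_card_Pm (b m : nat) : prime b -> (0 < m)%N ->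
  (b ^ m <= 3 * (#|Pm b m| * m))%N.
Proof.
move=> b_pr m_gt0; have [F charF card_F] := pPrimePowerField b_pr m_gt0.
pose L := pPrimeCharType charF.
have dim_L : \dim {:L} = m by rewrite pprimeChar_dimf card_F pfactorK.
have card_L : #|L| = (b ^ m)%N by rewrite -card_F.
have := card_finfield_le charF; rewrite card_L dim_L.
have := sum_expn_half_le m (prime_gt1 b_pr); lia.
Qed.

Section DualNet.
Variables (b m s : nat) (k : 'I_s -> nat).
Local Notation row := 'rV['F_b]_m.
Local Notation G := #|Gm b m|.

Definition dual_pairs :=
  [set pg : 'rV['F_b]_m.+1 * {ffun 'I_s -> row} |
    [&& pg.1 \in Pm b m, [forall j, pg.2 j \in Gm b m] &
        in_dual (polyOfRow pg.1) (fun j => polyOfRow (pg.2 j)) k] ].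

Lemma dual_probE :
  dual_prob b m k = #|dual_pairs|%:R / (#|Pm b m| * G ^ s)%N%:R.
Proof. by []. Qed.

Definition Gm_tuples := [set g : {ffun 'I_s -> row} | [forall j, g j \in Gm b m]].

Definition dual_fibre (p : {poly 'F_b}) :=
  [set g in Gm_tuples | in_dual p (fun j => polyOfRow (g j)) k].

Definition Pm_dvd_k :=
  [set c in Pm b m | [forall j, (polyOfRow c %| natpoly b (k j))%R]].

Lemma card_Gm_tuples : #|Gm_tuples| = (G ^ s)%N.
Proof.
rewrite -[s in RHS]card_ord -card_ffun_on; apply: eq_card => g.
by rewrite inE; apply/forallP/familyP.
Qed.

Lemma card_dual_pairs :
  #|dual_pairs| = (\sum_(c in Pm b m) #|dual_fibre (polyOfRow c)|)%N.
Proof.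
rewrite -sum1_card; symmetry.
rewrite (eq_bigr (fun c => \sum_(g in dual_fibre (polyOfRow c)) 1)%N) => [|c _].
  by rewrite pair_big_dep; apply: eq_bigl => -[c g]; rewrite !inE.
by rewrite sum1_card.
Qed.

Lemma card_dual_fibre_le (p : {poly 'F_b}) : (#|dual_fibre p| <= G ^ s)%N.
Proof.
rewrite -card_Gm_tuples subset_leq_card //.
by apply/subsetP => g; rewrite inE => /andP[].
Qed.

Lemma card_dual_fibre_coprime (p : {poly 'F_b}) j0 : size p = m.+1 ->
  coprimep p (natpoly b (k j0)) -> (#|dual_fibre p| * G <= G ^ s)%N.
Proof.
move=> size_p cop_p.
pose upd (gv : {ffun 'I_s -> row} * row) :=
  [ffun j => if j == j0 then gv.2 else gv.1 j].
(* The fibre condition determines g j0 from the other entries of g. *)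
have upd_inj : {in setX (dual_fibre p) (Gm b m) &, injective upd}.
  move=> [g v] [g' v'] /setXP[fib_g _] /setXP[fib_g' _] /= eq_upd.
  have upd_j j : upd (g, v) j = upd (g', v') j by rewrite eq_upd.
  have eq_v : v = v' by move: (upd_j j0); rewrite !ffunE eqxx.
  have eq_off j : j != j0 -> g j = g' j.
    by move=> neq_j; move: (upd_j j); rewrite !ffunE (negPf neq_j).
  suff eq_j0 : g j0 = g' j0.
    rewrite eq_v (_ : g = g') //; apply/ffunP => j.
    by case: (eqVneq j j0) => [->|/eq_off].
  move: fib_g fib_g'; rewrite !inE /in_dual => /andP[_ dvd_g] /andP[_ dvd_g'].
  rewrite (bigD1 j0) //= in dvd_g; rewrite (bigD1 j0) //= in dvd_g'.
  have eq_rest : \sum_(j | j != j0) natpoly b (k j) * polyOfRow (g j) =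
                 \sum_(j | j != j0) natpoly b (k j) * polyOfRow (g' j).
    by apply: eq_bigr => j /eq_off ->.
  rewrite eq_rest in dvd_g.
  apply: polyOfRow_inj; apply: dvdp_mulD_uniq cop_p _ _ dvd_g dvd_g';
    by rewrite size_p ltnS size_polyOfRow.
rewrite -card_Gm_tuples -cardsX -(card_in_imset upd_inj) subset_leq_card //.
apply/subsetP => _ /imsetP[[g v] /setXP[fib_g Gm_v] ->]; rewrite inE.
move: fib_g; rewrite !inE => /andP[/forallP Gm_g _].
by apply/forallP => j; rewrite ffunE; case: eqP.
Qed.

Lemma card_dual_pairs_le :
  (#|dual_pairs| * G <= (#|Pm_dvd_k| * G + #|Pm b m|) * G ^ s)%N.
Proof.
rewrite card_dual_pairs big_distrl /= (bigID (mem Pm_dvd_k)) /= mulnDl leq_add //.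
  rewrite (eq_bigl (mem Pm_dvd_k)) => [|c]; last first.
    by rewrite andb_idl // inE => /andP[].
  rewrite mulnAC -mulnA -sum_nat_const; apply: leq_sum => c _.
  by rewrite leq_mul2r card_dual_fibre_le orbT.
rewrite -sum_nat_const [X in (_ <= X)%N](bigID (mem Pm_dvd_k)) /=.
apply: leq_trans (leq_addl _ _).
apply: leq_sum => c /andP[Pm_c]; rewrite inE Pm_c => /forallPn[j0 ndvd].
have /PmP[_ size_c irr_c] := Pm_c.
by apply: (card_dual_fibre_coprime (j0 := j0)); rewrite ?irreducible_poly_coprime.
Qed.

End DualNet.

Theorem lemma2p19 (b m s : nat) (hb : prime b) (hm : (0 < m)%N) (hs : (0 < s)%N)
  (k : 'I_s -> nat) (hk : exists j, k j != 0%N) :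
  dual_prob b m k <= (3 * mu1v b k)%N%:R / (b ^ m - 1)%N%:R /\
  ((forall j, (k j < b ^ m)%N) -> dual_prob b m k <= 1 / (b ^ m - 1)%N%:R).
Proof.
have b_gt1 := prime_gt1 hb; have [j1 k_j1] := hk.
set f := natpoly b (k j1).
have G_gt0 : (0 < #|Gm b m|)%N.
  by rewrite card_Gm // subn_gt0 -{1}(expn0 b) ltn_exp2l.
have divisors_lt : (#|Pm_dvd_k b m k| * m < size f)%N.
  apply: leq_ltn_trans (card_Pm_dvdp_lt m (natpoly_neq0 b_gt1 hb k_j1)).
  rewrite leq_mul2r subset_leq_card ?orbT //.
  by apply/subsetP => c; rewrite !inE => /andP[-> /forallP ->].
have pairs_le := card_dual_pairs_le b m k.
rewrite dual_probE -card_Gm //; split=> [|k_lt].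
  apply: (@ler_nat_ratio rat) => //.
  have size_f : (size f <= mu1v b k)%N.
    rewrite (leq_trans (size_natpoly_le b_gt1 (ltn_expn_mu1 b_gt1 (k j1)))) //.
    by rewrite /mu1v (bigD1 j1) //= leq_addr.
  have G_le : (#|Gm b m| <= 3 * (#|Pm b m| * m))%N.
    by rewrite card_Gm // (leq_trans (leq_subr _ _)) ?expn_le_card_Pm.
  have weights_le : (#|Pm_dvd_k b m k| * #|Gm b m| + #|Pm b m| <=
                     3 * mu1v b k * #|Pm b m|)%N by nia.
  by rewrite mulnA (leq_trans pairs_le) // leq_mul2r weights_le orbT.
apply: (@ler_nat_ratio rat _ _ 1) => //.
have no_divisors : #|Pm_dvd_k b m k| = 0%N.
  by have := leq_trans divisors_lt (size_natpoly_le b_gt1 (k_lt j1)); nia.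
by rewrite mul1n; move: pairs_le; rewrite no_divisors.
Qed.
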